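(* For every odd integer $n\ge 3$ there exist a boolean classifier $\kappa:\{0,1\}^n\to\{0,1\}$ and a point $\mathbf v\in\{0,1\}^n$ such that, for the sample $(\mathbf v,\kappa(\mathbf v))$, some feature $i\in\mathcal F=\{1,\dots,n\}$ is relevant and $\mathrm{Sv}(i)=0$ (issue I3).
   Context: Let $\mathcal F=\{1,\dots,n\}$. A boolean classifier is a non-constant function $\kappa:\{0,1\}^n\to\{0,1\}$; a sample is a pair $(\mathbf v,c)$ with $\mathbf v\in\{0,1\}^n$ and $c=\kappa(\mathbf v)$. For $\mathcal S\subseteq\mathcal F$ let $\Upsilon(\mathcal S;\mathbf v)=\{\mathbf x\in\{0,1\}^n : x_j=v_j \text{ for all } j\in\mathcal S\}$ and, for any function $g$ on $\{0,1\}^n$, $\mathbf E[g\mid \mathbf x_{\mathcal S}=\mathbf v_{\mathcal S}]=|\Upsilon(\mathcal S;\mathbf v)|^{-1}\sum_{\mathbf x\in\Upsilon(\mathcal S;\mathbf v)}g(\mathbf x)$ (uniform distribution, independent features). The characteristic function is $\upsilon(\mathcal S)=\mathbf E[\kappa\mid\mathbf x_{\mathcal S}=\mathbf v_{\mathcal S}]$, and the SHAP score of feature $i$ is $\mathrm{Sv}(i)=\sum_{\mathcal S\subseteq\mathcal F\setminus\{i\}}\frac{|\mathcal S|!\,(n-|\mathcal S|-1)!}{n!}\big(\upsilon(\mathcal S\cup\{i\})-\upsilon(\mathcal S)\big)$. The similarity predicate is $\sigma(\mathbf x)=1$ if $\kappa(\mathbf x)=\kappa(\mathbf v)$ and $0$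 otherwise. A set $\mathcal S\subseteq\mathcal F$ is a weak abductive explanation (WAXp) if $\mathbf E[\sigma\mid\mathbf x_{\mathcal S}=\mathbf v_{\mathcal S}]=1$ (i.e. $\kappa(\mathbf x)=\kappa(\mathbf v)$ for all $\mathbf x\in\Upsilon(\mathcal S;\mathbf v)$); an abductive explanation (AXp) is a WAXp $\mathcal S$ such that $\mathcal S\setminus\{t\}$ is not a WAXp for every $t\in\mathcal S$. A feature is relevant if it belongs to at least one AXp, and irrelevant otherwise. *)

(* Features F = {1..n} are represented by 'I_n = {0..n-1};
   points of {0,1}^n are finite functions 'I_n -> bool; classifier values
   0/1 are booleans (interpreted as 0/1 in rat via nat_of_bool). *)
From mathcomp Require Import all_boot all_order all_algebra.
Set Implicit Arguments. Unset Strict Implicit. Unset Printing Implicit Defensive.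
Import Order.TTheory GRing.Theory Num.Theory.
Local Open Scope ring_scope.

Definition point (n : nat) := {ffun 'I_n -> bool}.
Definition classifier (n : nat) := point n -> bool.

Definition nonconstant n (kappa : classifier n) : Prop :=
  exists x y : point n, kappa x != kappa y.

Definition Upsilon n (S : {set 'I_n}) (v : point n) : {set point n} :=
  [set x : point n | [forall j in S, x j == v j]].

Definition condE n (g : point n -> rat) (S : {set 'I_n}) (v : point n) : rat :=
  (#|Upsilon S v|%:R)^-1 * \sum_(x in Upsilon S v) g x.

Definition charfun n (kappa : classifier n) (v : point n) (S : {set 'I_n}) : rat :=
  condE (fun x => (kappa x)%:R) S v.

Definition Sv n (kappa : classifier n) (v : point n) (i : 'I_n) : rat :=
  \sum_(S : {set 'I_n} | i \notin S)
    ((#|S|`! * (n - #|S| - 1)`!)%:R / (n`!)%:R) *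
    (charfun kappa v (i |: S) - charfun kappa v S).

Definition sigma n (kappa : classifier n) (v : point n) (x : point n) : rat :=
  (kappa x == kappa v)%:R.

Definition WAXp n (kappa : classifier n) (v : point n) (S : {set 'I_n}) : Prop :=
  condE (sigma kappa v) S v = 1.

Definition AXp n (kappa : classifier n) (v : point n) (S : {set 'I_n}) : Prop :=
  WAXp kappa v S /\ forall t, t \in S -> ~ WAXp kappa v (S :\ t).

Definition relevant n (kappa : classifier n) (v : point n) (i : 'I_n) : Prop :=
  exists S : {set 'I_n}, AXp kappa v S /\ i \in S.

(* The classifier only looks at three features, and is true exactly on the
   patterns 010 and 101 of those features; take v = 11...1.  Averaging over the
   other features shows that the characteristic function of the n-feature
   classifier is the one of the 3-feature classifier on the traced coalition.
   Toggling every feature other than the first one maps the coalitions avoiding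
   it onto themselves, preserves the Shapley weights (a coalition of size s goes
   to one of size n - 1 - s) and, by a direct computation in dimension 3,
   changes the sign of the marginal contribution of the first feature; hence
   its SHAP score vanishes.  It is nevertheless relevant: the first two
   features form an AXp. *)

From mathcomp Require Import all_boot all_order all_algebra.
From mathcomp Require Import ring lra zify.
Set Implicit Arguments. Unset Strict Implicit. Unset Printing Implicit Defensive.
Import Order.TTheory GRing.Theory Num.Theory.
Local Open Scope ring_scope.

Definition ones n : point n := [ffun => true].

Lemma in_Upsilon n (S : {set 'I_n}) (v x : point n) :
  (x \in Upsilon S v) = [forall j in S, x j == v j].
Proof. by rewrite inE. Qed.

Lemma Upsilon_refl n (S : {set 'I_n}) (v : point n) : v \in Upsilon S v.
Proof. by rewrite inE; apply/forallP => j; rewrite eqxx implybT. Qed.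

Lemma WAXpP n (kappa : classifier n) (v : point n) (S : {set 'I_n}) :
  WAXp kappa v S <-> {in Upsilon S v, forall x, kappa x = kappa v}.
Proof.
have card_neq0 : (#|Upsilon S v|%:R : rat) != 0.
  by rewrite pnatr_eq0 -lt0n; apply/card_gt0P; exists v; exact: Upsilon_refl.
rewrite /WAXp /condE; split => [E x Hx|H]; last first.
  rewrite (eq_bigr (fun=> 1)) => [|x /H]; last by rewrite /sigma => ->; rewrite eqxx.
  by rewrite sumr_const mulVf.
have miss0 : \sum_(y in Upsilon S v) (1 - sigma kappa v y) = 0.
  rewrite sumrB sumr_const; apply/eqP; rewrite subr_eq0; apply/eqP.
  by apply: (mulfI (invr_neq0 card_neq0)); rewrite E mulVf.
have ge0 y : y \in Upsilon S v -> 0 <= 1 - sigma kappa v y.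
  by rewrite subr_ge0 /sigma; case: (_ == _).
move/eqP: (psumr_eq0P ge0 miss0 Hx); rewrite subr_eq0 eq_sym /sigma pnatr_eq1.
by case: (kappa x =P kappa v).
Qed.

Lemma relevant_nonconstant n (kappa : classifier n) (v : point n) (i : 'I_n) :
  relevant kappa v i -> nonconstant kappa.
Proof.
case=> S [[_ minS] iS].
have /exists_inP [x _ kx] : [exists x in Upsilon (S :\ i) v, kappa x != kappa v].
  apply/contraT => /exists_inPn allv.
  by case: (minS i iS); apply/WAXpP => x /allv /negPn /eqP.
by exists x, v.
Qed.

Definition marginal n (kappa : classifier n) (v : point n) (i : 'I_n)
    (S : {set 'I_n}) : rat :=
  charfun kappa v (i |: S) - charfun kappa v S.

Definition toggle_others n (i : 'I_n) (S : {set 'I_n}) : {set 'I_n} :=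
  [set j | (j != i) (+) (j \in S)].

Lemma in_toggle_others n (i j : 'I_n) (S : {set 'I_n}) :
  (j \in toggle_others i S) = (j != i) (+) (j \in S).
Proof. by rewrite inE. Qed.

Lemma toggle_othersK n (i : 'I_n) : involutive (toggle_others i).
Proof. by move=> S; apply/setP => j; rewrite !inE addKb. Qed.

Lemma in_toggle_others_self n (i : 'I_n) (S : {set 'I_n}) :
  (i \in toggle_others i S) = (i \in S).
Proof. by rewrite inE eqxx. Qed.

Lemma card_toggle_others n (i : 'I_n) (S : {set 'I_n}) : i \notin S ->
  #|toggle_others i S| = (n - #|S| - 1)%N.
Proof.
move=> iNS; have -> : toggle_others i S = ~: S :\ i.
  by apply/setP => j; rewrite !inE; case: eqVneq => [->|]; rewrite ?(negbTE iNS).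
have := cardsC S; have := cardsD1 i (~: S); rewrite inE iNS card_ord /=.
set a := #|S|; set b := #|~: S|; set c := #|~: S :\ i|.
lia.
Qed.

Definition shapley_weight (n m : nat) : rat := (m`! * (n - m - 1)`!)%:R / (n`!)%:R.

Lemma SvE n (kappa : classifier n) (v : point n) (i : 'I_n) :
  Sv kappa v i =
  \sum_(S : {set 'I_n} | i \notin S) shapley_weight n #|S| * marginal kappa v i S.
Proof. by []. Qed.

Lemma shapley_weight_sym n m : (m < n)%N ->
  shapley_weight n (n - m - 1) = shapley_weight n m.
Proof.
by move=> ltmn; rewrite /shapley_weight mulnC; have -> : (n - (n - m - 1) - 1 = m)%N by lia.
Qed.

Lemma Sv_eq0 n (kappa : classifier n) (v : point n) (i : 'I_n) :
  (forall S : {set 'I_n}, i \notin S ->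
     marginal kappa v i (toggle_others i S) = - marginal kappa v i S) ->
  Sv kappa v i = 0.
Proof.
move=> antisym.
have weight_toggle (S : {set 'I_n}) : i \notin S ->
    shapley_weight n #|toggle_others i S| = shapley_weight n #|S|.
  move=> iNS; rewrite card_toggle_others // shapley_weight_sym //.
  rewrite -[X in (_ < X)%N]card_ord -cardsT.
  by apply/proper_card/properP; split => //; exists i.
have : Sv kappa v i = - Sv kappa v i.
  rewrite SvE {1}(reindex_inj (inv_inj (toggle_othersK i))) /= -sumrN.
  apply: eq_big => [S|S]; rewrite in_toggle_others_self // => iNS.
  by rewrite antisym // weight_toggle // mulrN.
lra.
Qed.

Definition flip n (m : 'I_n -> bool) (x : point n) : point n :=
  [ffun j => x j (+) m j].

Lemma flipK n (m : 'I_n -> bool) : involutive (flip m).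
Proof. by move=> x; apply/ffunP => j; rewrite !ffunE addbK. Qed.

Section Restriction.

Variables (n k : nat) (f : 'I_k -> 'I_n).
Hypothesis f_inj : injective f.

Definition restrict (x : point n) : point k := [ffun j => x (f j)].

Lemma restrict_ones : restrict (ones n) = ones k.
Proof. by apply/ffunP => j; rewrite !ffunE. Qed.

Lemma restrict_Upsilon (S : {set 'I_n}) (v x : point n) :
  x \in Upsilon S v -> restrict x \in Upsilon (f @^-1: S) (restrict v).
Proof.
rewrite !in_Upsilon => /forall_inP xSv; apply/forall_inP => j.
by rewrite inE !ffunE => /xSv.
Qed.

Definition fibre (S : {set 'I_n}) (v : point n) (y : point k) : {set point n} :=
  [set x in Upsilon S v | restrict x == y].

(* Flipping the coordinates f j at which y and y' differ maps the fibre over y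
   into the fibre over y'. *)
Lemma card_fibre_le (S : {set 'I_n}) (v : point n) (y y' : point k) :
  y \in Upsilon (f @^-1: S) (restrict v) -> y' \in Upsilon (f @^-1: S) (restrict v) ->
  (#|fibre S v y| <= #|fibre S v y'|)%N.
Proof.
rewrite !in_Upsilon => /forall_inP ySv /forall_inP y'Sv.
pose m i := [exists j, (f j == i) && (y j != y' j)].
have m_f j : m (f j) = (y j != y' j).
  apply/existsP/idP => [[j' /andP [/eqP fj'j]]|yy']; last by exists j; rewrite eqxx.
  by rewrite (f_inj fj'j).
rewrite -(card_imset _ (can_inj (flipK m))); apply/subset_leq_card/subsetP => z.
case/imsetP => x; rewrite inE in_Upsilon => /andP [/forall_inP xSv /eqP xy] ->{z}.
rewrite inE in_Upsilon; apply/andP; split.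
  apply/forall_inP => i iS; rewrite ffunE (eqP (xSv i iS)).
  suff -> : m i = false by rewrite addbF.
  apply/existsP => -[j /andP [/eqP fji]]; subst i.
  have jS : j \in f @^-1: S by rewrite inE.
  by rewrite (eqP (ySv j jS)) (eqP (y'Sv j jS)) !ffunE eqxx.
apply/eqP/ffunP => j; rewrite !ffunE m_f -xy ffunE.
by case: (x (f j)) (y' j) => [] [].
Qed.

Lemma card_fibre (S : {set 'I_n}) (v : point n) (y : point k) :
  y \in Upsilon (f @^-1: S) (restrict v) -> #|fibre S v y| = #|fibre S v (restrict v)|.
Proof.
have vSv := Upsilon_refl (f @^-1: S) (restrict v).
by move=> ySv; apply/eqP; rewrite eqn_leq !card_fibre_le.
Qed.

Lemma sum_restrict (S : {set 'I_n}) (v : point n) (G : point k -> rat) :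
  \sum_(x in Upsilon S v) G (restrict x) =
  #|fibre S v (restrict v)|%:R * \sum_(y in Upsilon (f @^-1: S) (restrict v)) G y.
Proof.
rewrite (partition_big restrict (mem (Upsilon (f @^-1: S) (restrict v)))) /=;
  last exact: restrict_Upsilon.
rewrite mulr_sumr; apply: eq_bigr => y ySv.
rewrite (eq_bigr (fun=> G y)) => [|x /andP [_ /eqP ->] //].
rewrite sumr_const -(card_fibre ySv) mulr_natl.
by congr (_ *+ _); apply: eq_card => x; rewrite inE.
Qed.

Lemma condE_restrict (S : {set 'I_n}) (v : point n) (G : point k -> rat) :
  condE (G \o restrict) S v = condE G (f @^-1: S) (restrict v).
Proof.
have fibre_neq0 : (#|fibre S v (restrict v)|%:R : rat) != 0.
  by rewrite pnatr_eq0 -lt0n; apply/card_gt0P; exists v; rewrite inE Upsilon_refl eqxx.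
have card_restrict : (#|Upsilon S v|%:R : rat) =
    #|fibre S v (restrict v)|%:R * #|Upsilon (f @^-1: S) (restrict v)|%:R.
  by have := sum_restrict S v (fun=> 1); rewrite !sumr_const.
by rewrite /condE sum_restrict card_restrict invfM mulrACA mulVf ?mul1r.
Qed.

Lemma charfun_restrict (K : classifier k) (v : point n) (S : {set 'I_n}) :
  charfun (K \o restrict) v S = charfun K (restrict v) (f @^-1: S).
Proof. exact: (condE_restrict S v (fun y => (K y)%:R)). Qed.

Lemma WAXp_restrict (K : classifier k) (v : point n) (S : {set 'I_n}) :
  WAXp (K \o restrict) v S <-> WAXp K (restrict v) (f @^-1: S).
Proof. by rewrite /WAXp -(condE_restrict S v (sigma K (restrict v))). Qed.

Lemma relevant_restrict (K : classifier k) (v : point n) (j : 'I_k) :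
  relevant K (restrict v) j -> relevant (K \o restrict) v (f j).
Proof.
have preim_imset (T : {set 'I_k}) : f @^-1: (f @: T) = T.
  by apply/setP => i; rewrite inE mem_imset.
case=> T [[wT minT] jT]; exists (f @: T); split; last by rewrite mem_imset.
split => [|_ /imsetP [t tT ->]]; first by apply/WAXp_restrict; rewrite preim_imset.
rewrite WAXp_restrict; have -> : f @^-1: (f @: T :\ f t) = T :\ t.
  by apply/setP => i; rewrite !inE (inj_eq f_inj) mem_imset.
exact: minT.
Qed.

Lemma marginal_restrict (K : classifier k) (v : point n) (j : 'I_k) (S : {set 'I_n}) :
  marginal (K \o restrict) v (f j) S = marginal K (restrict v) j (f @^-1: S).
Proof.
rewrite /marginal !charfun_restrict; have -> // : f @^-1: (f j |: S) = j |: f @^-1: S.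
by apply/setP => i; rewrite !inE (inj_eq f_inj).
Qed.

Lemma preimset_toggle_others (j : 'I_k) (S : {set 'I_n}) :
  f @^-1: toggle_others (f j) S = toggle_others j (f @^-1: S).
Proof. by apply/setP => i; rewrite !inE (inj_eq f_inj). Qed.

End Restriction.

Definition zigzag (y : point 3) : bool := (y 0 != y 1) && (y 1 != y 2).

Lemma ord3P (j : 'I_3) : [\/ j = 0, j = 1 | j = 2].
Proof.
by case: j => [[|[|[|//]]] lt_j3]; [constructor 1 | constructor 2 | constructor 3];
  apply: val_inj.
Qed.

Lemma in_Upsilon3 (T : {set 'I_3}) (v x : point 3) :
  (x \in Upsilon T v) =
  [&& (0 \in T) ==> (x 0 == v 0), (1 \in T) ==> (x 1 == v 1)
    & (2 \in T) ==> (x 2 == v 2)].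
Proof.
rewrite in_Upsilon; apply/forall_inP/and3P => [xTv | [x0 x1 x2] j].
  by split; apply/implyP => /xTv.
by case: (ord3P j) => ->; apply/implyP.
Qed.

Definition cube3 (a b c : bool) : point 3 := [ffun j : 'I_3 => nth false [:: a; b; c] j].

Lemma sum_point3 (F : point 3 -> rat) :
  \sum_(x : point 3) F x = \sum_(a : bool) \sum_(b : bool) \sum_(c : bool) F (cube3 a b c).
Proof.
pose coords (x : point 3) := (x 0, x 1, x 2).
have cube3K : cancel coords (fun t => cube3 t.1.1 t.1.2 t.2).
  by move=> x; apply/ffunP => j; rewrite ffunE; case: (ord3P j) => ->.
have coordsK : cancel (fun t => cube3 t.1.1 t.1.2 t.2) coords.
  by case=> [[a b] c]; rewrite /coords !ffunE.
rewrite (reindex _ (onW_bij _ (Bijective coordsK cube3K))) /=.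
transitivity (\sum_(ab : bool * bool) \sum_(c : bool) F (cube3 ab.1 ab.2 c)).
  by rewrite [RHS]pair_big; apply: eq_bigr => -[[a b] c].
by rewrite [RHS]pair_big; apply: eq_bigr => -[a b].
Qed.

Lemma condE_point3 (g : point 3 -> rat) (T : {set 'I_3}) (v : point 3) :
  let w a b c := (cube3 a b c \in Upsilon T v)%:R in
  condE g T v = (\sum_a \sum_b \sum_c w a b c)^-1 *
                \sum_a \sum_b \sum_c w a b c * g (cube3 a b c).
Proof.
rewrite /condE -sumr_const big_mkcond [X in _ * X]big_mkcond !sum_point3 /=.
by congr (_^-1 * _); do 3!apply: eq_bigr => ? _; case: ifP; rewrite ?mul1r ?mul0r.
Qed.

Lemma zigzag_cube3 a b c : zigzag (cube3 a b c) = (a != b) && (b != c).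
Proof. by rewrite /zigzag !ffunE. Qed.

Lemma cube3_in_Upsilon_ones (T : {set 'I_3}) a b c :
  (cube3 a b c \in Upsilon T (ones 3)) =
  [&& (0 \in T) ==> a, (1 \in T) ==> b & (2 \in T) ==> c].
Proof. by rewrite in_Upsilon3 !ffunE /= !eqb_id. Qed.

Lemma marginal_zigzag_toggle (T : {set 'I_3}) : 0 \notin T ->
  marginal zigzag (ones 3) 0 (toggle_others 0 T) = - marginal zigzag (ones 3) 0 T.
Proof.
move=> T0; rewrite /marginal /charfun !condE_point3 !big_bool.
rewrite !cube3_in_Upsilon_ones !zigzag_cube3 !in_setU1 !in_toggle_others (negbTE T0).
(* The marginals of T = {}, {1}, {2}, {1, 2} are 0, -1/4, 1/4, 0. *)
by case: (1 \in T); case: (2 \in T); rewrite /=; field.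
Qed.

Lemma relevant_zigzag : relevant zigzag (ones 3) 0.
Proof.
have zigzag_ones : zigzag (ones 3) = false by rewrite /zigzag !ffunE.
exists [set 0; 1]; split; last by rewrite !inE eqxx.
split => [|t].
  apply/WAXpP => x; rewrite in_Upsilon3 !inE /= !ffunE zigzag_ones.
  by case/and3P => /eqP x0 /eqP x1 _; rewrite /zigzag x0 x1.
rewrite !inE => /orP [] /eqP -> /WAXpP all_false.
  have := all_false (cube3 false true false).
  by rewrite cube3_in_Upsilon_ones !inE zigzag_cube3 zigzag_ones => /(_ isT).
have := all_false (cube3 true false true).
by rewrite cube3_in_Upsilon_ones !inE zigzag_cube3 zigzag_ones => /(_ isT).
Qed.

Lemma Sv_zigzag_restrict n (f : 'I_3 -> 'I_n) : injective f ->
  Sv (zigzag \o restrict f) (ones n) (f 0) = 0.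
Proof.
move=> f_inj; apply: Sv_eq0 => S fS.
rewrite !marginal_restrict // preimset_toggle_others // restrict_ones.
by apply: marginal_zigzag_toggle; rewrite inE.
Qed.

Theorem proposition2 (n : nat) :
  odd n -> (3 <= n)%N ->
  exists (kappa : classifier n) (v : point n),
    nonconstant kappa /\
    exists i : 'I_n, relevant kappa v i /\ Sv kappa v i = 0%R.
Proof.
move=> _ n_ge3; pose f := widen_ord n_ge3.
have f_inj : injective f by move=> i j /(congr1 val) fij; apply: val_inj.
have rel : relevant (zigzag \o restrict f) (ones n) (f 0).
  by apply: relevant_restrict => //; rewrite restrict_ones; exact: relevant_zigzag.
exists (zigzag \o restrict f), (ones n); split; first exact: relevant_nonconstant rel.
by exists (f 0); split; last exact: Sv_zigzag_restrict.
Qed.
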